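(* Let $G$ be a biconnected plane embedded graph whose external boundary is a simple cycle $C$, and let $f$ be a convex combination map of $G$. If $u$ is an external vertex, then $f(v)\neq f(u)$ for every vertex $v\neq u$.
   Context: Vertices on $C$ are external, others internal. A convex combination map of $G$ is a map $f$ from vertices to $\mathbb{R}^2$ such that the external vertices are mapped bijectively, in cyclic order along $C$, to the corners of a convex polygon $P$, and there are coefficients $\lambda_{uv}\ge0$, $\sum_v\lambda_{uv}=1$, $\lambda_{uv}>0$ iff ($u$ internal and $v$ a neighbour of $u$), with $f(u)=\sum_v\lambda_{uv}f(v)$ for every internal $u$. *)

From HB Require Import structures.
From mathcomp Require Import all_boot all_order all_algebra.
Set Implicit Arguments. Unset Strict Implicit. Unset Printing Implicit Defensive.
Import Order.TTheory GRing.Theory Num.Theory.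
Local Open Scope ring_scope.

Definition simple_graph (T : finType) (e : rel T) : Prop :=
  symmetric e /\ irreflexive e.

Definition del_vertex (T : finType) (e : rel T) (z : T) : rel T :=
  [rel x y | [&& e x y, x != z & y != z]].

Definition biconnected (T : finType) (e : rel T) : Prop :=
  (3 <= #|T|)%N /\
  (forall x y : T, connect e x y) /\
  (forall z x y : T, x != z -> y != z -> connect (del_vertex e z) x y).

Definition simple_cycle (T : finType) (e : rel T) (C : seq T) : Prop :=
  [/\ (3 <= size C)%N, uniq C & cycle e C].

Definition orient (R : numDomainType) (a b c : R * R) : R :=
  (b.1 - a.1) * (c.2 - a.2) - (b.2 - a.2) * (c.1 - a.1).

(* s lists, in cyclic order, the (pairwise distinct) corners of a convex
   polygon: every other corner lies strictly on the same side of the line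
   through two cyclically consecutive corners (either all strictly left =
   counterclockwise, or all strictly right = clockwise). *)
Definition convex_polygon_corners (R : numDomainType) (s : seq (R * R)) : Prop :=
  let k := size s in
  let p := fun i => nth (0, 0) s i in
  [/\ (3 <= k)%N, uniq s &
      (forall i j : nat, (i < k)%N -> (j < k)%N -> j != i -> j != (i.+1 %% k)%N ->
         0 < orient (p i) (p (i.+1 %% k)%N) (p j)) \/
      (forall i j : nat, (i < k)%N -> (j < k)%N -> j != i -> j != (i.+1 %% k)%N ->
         orient (p i) (p (i.+1 %% k)%N) (p j) < 0)].

(* convex combination map of the graph (T, e) with outer cycle C:
   vertices of C are external, all others internal. *)
Definition convex_combination_map (R : realFieldType) (T : finType) (e : rel T)
    (C : seq T) (f : T -> R * R) : Prop :=
  convex_polygon_corners (map f C) /\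
  exists lam : T -> T -> R,
    [/\ (forall u v, 0 <= lam u v),
        (forall u v, 0 < lam u v <-> (u \notin C /\ e u v)),
        (forall u, u \notin C -> \sum_(v : T) lam u v = 1) &
        (forall u, u \notin C ->
           f u = (\sum_(v : T) lam u v * (f v).1, \sum_(v : T) lam u v * (f v).2))].

From HB Require Import structures.
From mathcomp Require Import all_boot all_order all_algebra.
From mathcomp Require Import zify ring.
Set Implicit Arguments.
Unset Strict Implicit.
Unset Printing Implicit Defensive.
Import Order.TTheory GRing.Theory Num.Theory.
Local Open Scope ring_scope.

(* Let u be a corner of the
   outer polygon P.  Adding the orientation forms of the two sides of P
   through f(u) yields an affine function L : R^2 -> R that vanishes at f(u)
   and is strictly positive at every other corner of P.  Affine functions
   commute with convex combinations, so g := L o f satisfies, at every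
   internal vertex, g(x) = sum_y lam(x,y) g(y) with positive weights on the
   neighbours of x; hence a minimiser of g that is internal passes the
   minimum on to all its neighbours.  Since G is connected, some external
   vertex minimises g, so g >= 0 everywhere.  If f(v) = f(u) for v <> u,
   then g(v) = 0 is minimal and v is internal (g > 0 on C \ {u}); a path
   from v to another corner avoiding u (biconnectivity) leaves the interior
   at some external vertex y <> u reached through internal vertices only,
   so g(y) = 0 as well, contradicting g(y) > 0.
   The file first develops affine functions and the supporting line at a
   corner, then small facts on lists and walks (leaving the interior,
   avoiding a deleted vertex), then the minimum principle for weighted
   averages on graphs, and finally derives the theorem. *)

Definition affine_fun (R : pzRingType) (al be ga : R) (c : R * R) : R :=
  al * c.1 + be * c.2 + ga.

Lemma orient_affine (R : numDomainType) (a b : R * R) :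
  orient a b =1 affine_fun (a.2 - b.2) (b.1 - a.1) (a.1 * b.2 - a.2 * b.1).
Proof. by move=> c; rewrite /orient /affine_fun; ring. Qed.

Lemma orient_start (R : numDomainType) (a b : R * R) : orient a b a = 0.
Proof. by rewrite /orient !subrr !mulr0 subrr. Qed.

Lemma orient_end (R : numDomainType) (a b : R * R) : orient a b b = 0.
Proof. by rewrite /orient mulrC subrr. Qed.

Lemma affine_funD (R : comPzRingType) (s t a1 b1 c1 a2 b2 c2 : R) (x : R * R) :
  s * affine_fun a1 b1 c1 x + t * affine_fun a2 b2 c2 x =
  affine_fun (s * a1 + t * a2) (s * b1 + t * b2) (s * c1 + t * c2) x.
Proof. by rewrite /affine_fun; ring. Qed.

Lemma affine_fun_comb (R : comPzRingType) (I : finType) (lam : I -> R)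
    (x : I -> R * R) (al be ga : R) :
  \sum_i lam i = 1 ->
  affine_fun al be ga (\sum_i lam i * (x i).1, \sum_i lam i * (x i).2) =
  \sum_i lam i * affine_fun al be ga (x i).
Proof.
move=> lam_sum1; rewrite /affine_fun /=.
rewrite -[ga]mul1r -{1}lam_sum1 !mulr_sumr mulr_suml -!big_split /=.
by apply: eq_bigr => i _; ring.
Qed.

Definition prev_index (k i : nat) : nat := if i == 0%N then k.-1 else i.-1.

Lemma succ_mod (k i : nat) : (i < k)%N ->
  (i.+1 %% k = if i.+1 == k then 0 else i.+1)%N.
Proof.
move=> lt_ik; case: eqP => [->|/eqP ne]; first by rewrite modnn.
by rewrite modn_small // ltn_neqAle ne.
Qed.

Lemma cyclic_neighbours (k i : nat) : (3 <= k)%N -> (i < k)%N ->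
  let h := prev_index k i in
  [/\ (h < k)%N, (h.+1 %% k = i)%N & (i.+1 %% k != h)%N].
Proof.
move=> le3k lt_ik /=; rewrite /prev_index.
have [-> | ne_i0] := eqVneq i 0%N; rewrite ?eqxx ?(negbTE ne_i0) !succ_mod; try lia.
all: by split; [| | apply/eqP]; repeat case: eqP => ?; lia.
Qed.

Lemma convex_corners_sign (R : numDomainType) (s : seq (R * R)) :
  convex_polygon_corners s ->
  let k := size s in let p := fun i => nth (0, 0) s i in
  exists sg : R, forall i j, (i < k)%N -> (j < k)%N -> j != i ->
    j != (i.+1 %% k)%N -> 0 < sg * orient (p i) (p (i.+1 %% k)%N) (p j).
Proof.
case=> _ _ [side|side]; [exists 1 | exists (-1)] => i j *.
  by rewrite mul1r side.
by rewrite mulN1r oppr_gt0 side.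
Qed.

(* Supporting line at a corner: for every corner a of a convex polygon
   there is an affine function vanishing at a and positive at all other
   corners (the sum of the orientation forms of the two sides through a). *)
Lemma corner_support (R : numDomainType) (s : seq (R * R)) (a : R * R) :
  convex_polygon_corners s -> a \in s ->
  exists al be ga : R, affine_fun al be ga a = 0 /\
    forall b, b \in s -> b != a -> 0 < affine_fun al be ga b.
Proof.
move=> convex a_in; have [le3k _ _] := convex.
set k := size s in le3k; set p := fun i => nth (0, 0) s i.
have [sg side] := convex_corners_sign convex.
set i := index a s; have lt_ik : (i < k)%N by rewrite index_mem.
have [lt_hk hS ne_jh] := cyclic_neighbours le3k lt_ik.
set j := (i.+1 %% k)%N in ne_jh; set h := prev_index k i in lt_hk hS ne_jh.
pose L c := sg * orient (p h) (p i) c + sg * orient (p i) (p j) c.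
have [al [be [ga L_affine]]] : exists al be ga, L =1 affine_fun al be ga.
  by do 3!eexists; move=> c; rewrite /L !orient_affine affine_funD.
exists al, be, ga; split=> [|b b_in ne_ba]; rewrite -L_affine /L.
  rewrite -[a](nth_index (0, 0) a_in) -/i -/(p i).
  by rewrite orient_end orient_start !mulr0 addr0.
have ib := nth_index (0, 0) b_in; set l := index b s in ib.
have lt_lk : (l < k)%N by rewrite index_mem.
have ne_li : l != i by apply: contra ne_ba => /eqP eq_li; rewrite -ib eq_li nth_index.
rewrite -ib -/(p l).
have side_h : l != h -> 0 < sg * orient (p h) (p i) (p l).
  by move=> ne_lh; have := side h l lt_hk lt_lk ne_lh; rewrite hS; apply.
have side_i : l != j -> 0 < sg * orient (p i) (p j) (p l) by exact: side.
case: (eqVneq l j) => [eq_lj|ne_lj].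
  by rewrite eq_lj orient_end mulr0 addr0 -eq_lj side_h // eq_lj.
case: (eqVneq l h) => [eq_lh|ne_lh].
  by rewrite eq_lh orient_start mulr0 add0r -eq_lh side_i.
by rewrite addr_gt0 ?side_h ?side_i.
Qed.

Lemma uniq_map_inj_in (T1 T2 : eqType) (f : T1 -> T2) (s : seq T1) :
  uniq (map f s) -> {in s &, injective f}.
Proof.
elim: s => //= a s IHs /andP[fa_notin uniq_fs] x y.
rewrite !inE => /predU1P[->|x_in] /predU1P[->|y_in] // eq_f.
- by move: fa_notin; rewrite eq_f map_f.
- by move: fa_notin; rewrite -eq_f map_f.
- exact: IHs.
Qed.

Lemma other_member (T : eqType) (s : seq T) (u : T) :
  uniq s -> (2 <= size s)%N -> u \in s -> exists2 x, x \in s & x != u.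
Proof.
move=> uniq_s size_s u_in; have := size_rem u_in.
case def_r: (rem u s) => [|x r] size_r; first by move: size_s size_r => /=; lia.
have : x \in rem u s by rewrite def_r mem_head.
by rewrite (mem_rem_uniq _ uniq_s) => /andP[ne_xu x_in]; exists x.
Qed.

(* Edges leaving internal vertices: those along which the averaging
   relation propagates information. *)
Definition inner_edge (T : eqType) (C : seq T) (e : rel T) : rel T :=
  [rel x y | (x \notin C) && e x y].

Lemma exit_to_boundary (T : finType) (e : rel T) (C : seq T) (x y : T) :
  connect e x y -> y \in C -> exists2 z, z \in C & connect (inner_edge C e) x z.
Proof.
move=> /connectP[p]; elim: p x => [|x' p IHp] x /=; first by move=> _ -> x_in; exists x.
move=> /andP[e_xx' walk] def_y y_in.
have [x_in|x_notin] := boolP (x \in C); first by exists x.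
have [z z_in inner_x'z] := IHp x' walk def_y y_in; exists z => //.
by apply: connect_trans inner_x'z; apply: connect1; apply/andP.
Qed.

Lemma connect_del_vertex (T : finType) (e : rel T) (z x y : T) :
  x != z -> connect (del_vertex e z) x y -> y != z.
Proof.
move=> ne_xz /connectP[p walk ->]; case/lastP: p walk => //= p y'.
by rewrite rcons_path last_rcons => /andP[_ /and3P[]].
Qed.

Lemma connect_inner_del_vertex (T : finType) (e : rel T) (C : seq T) (z x y : T) :
  connect (inner_edge C (del_vertex e z)) x y ->
  connect (inner_edge C e) x y /\ connect (del_vertex e z) x y.
Proof.
move=> conn; split; apply: connect_sub conn => a b /andP[a_notin /and3P[e_ab ne_az ne_bz]].
- by apply: connect1; apply/andP.
- by apply: connect1; apply/and3P.
Qed.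

Definition minimizer (R : numDomainType) (T : Type) (g : T -> R) (x : T) : Prop :=
  forall y, g x <= g y.

Section MinimumPrinciple.
Variables (R : realDomainType) (T : finType) (e : rel T) (C : seq T).
Variables (lam : T -> T -> R) (g : T -> R).
Hypothesis lam_ge0 : forall x y, 0 <= lam x y.
Hypothesis lam_pos : forall x y, x \notin C -> e x y -> 0 < lam x y.
Hypothesis lam_sum1 : forall x, x \notin C -> \sum_y lam x y = 1.
Hypothesis g_mean : forall x, x \notin C -> g x = \sum_y lam x y * g y.

(* A minimiser at an internal vertex forces the minimum at each neighbour:
   otherwise the weighted average would exceed the minimum. *)
Lemma minimizer_inner_edge (x y : T) :
  minimizer g x -> inner_edge C e x y -> minimizer g y.
Proof.
move=> x_min /andP[x_notin e_xy] z; apply: le_trans (x_min z).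
rewrite leNgt; apply/negP => lt_x_y.
have : \sum_w lam x w * g x < \sum_w lam x w * g w.
  rewrite (bigD1 y) //= [X in _ < X](bigD1 y) //=.
  apply: ltr_leD; first by rewrite ltr_pM2l ?lam_pos.
  by apply: ler_sum => w _; rewrite ler_wpM2l.
by rewrite -mulr_suml lam_sum1 // mul1r -g_mean // ltxx.
Qed.

Lemma minimizer_connect (x y : T) :
  connect (inner_edge C e) x y -> minimizer g x -> minimizer g y.
Proof.
move=> /connectP[p]; elim: p x => [|x' p IHp] x /=; first by move=> _ ->.
move=> /andP[inner_xx' walk] def_y x_min.
exact: IHp walk def_y (minimizer_inner_edge x_min inner_xx').
Qed.

Lemma boundary_minimizer (u : T) :
  (forall x y, connect e x y) -> u \in C -> exists2 z, z \in C & minimizer g z.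
Proof.
move=> conn u_in; have [w _ w_min] := @arg_minP _ R T u xpredT g isT.
have [z z_in inner_wz] := exit_to_boundary (conn w u) u_in.
by exists z => //; apply: minimizer_connect inner_wz _ => y; apply: w_min.
Qed.

End MinimumPrinciple.

Theorem lemma2p2 (R : realFieldType) (T : finType) (e : rel T) (C : seq T)
    (f : T -> R * R) :
  simple_graph e -> biconnected e -> simple_cycle e C ->
  convex_combination_map e C f ->
  forall u v : T, u \in C -> v != u -> f v <> f u.
Proof.
move=> _ [_ [conn biconn]] [size_C uniq_C _] [corners [lam [lam_ge0 lam_pos lam_sum1 f_mean]]].
move=> u v u_in ne_vu eq_f.
have [al [be [ga [L_u L_pos]]]] := corner_support corners (map_f f u_in).
pose g x := affine_fun al be ga (f x).
have g_pos y : y \in C -> y != u -> 0 < g y.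
  move=> y_in ne_yu; apply: L_pos; first exact: map_f.
  apply: contra ne_yu => /eqP eq_fy.
  by have [_ uniq_fC _] := corners; apply/eqP; apply: (uniq_map_inj_in uniq_fC).
have lam_pos' x y : x \notin C -> e x y -> 0 < lam x y.
  by move=> ? ?; apply/lam_pos.
have g_mean x : x \notin C -> g x = \sum_y lam x y * g y.
  by move=> x_notin; rewrite /g f_mean // affine_fun_comb // lam_sum1.
(* The minimum of g is attained on C, hence is nonnegative. *)
have [z z_in z_min] := boundary_minimizer lam_ge0 lam_pos' lam_sum1 g_mean conn u_in.
have g_v : g v = 0 by rewrite /g eq_f.
have v_min : minimizer g v.
  move=> y; rewrite g_v; apply: le_trans (z_min y).
  by have [->|ne_zu] := eqVneq z u; [rewrite /g L_u | rewrite ltW ?g_pos].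
have v_notin : v \notin C by apply/negP => v_in; move: (g_pos v v_in ne_vu); rewrite g_v ltxx.
(* Leave the interior from v along a walk avoiding u. *)
have [x x_in ne_xu] := other_member uniq_C (ltnW size_C) u_in.
have [y y_in] := exit_to_boundary (biconn u v x ne_vu ne_xu) x_in.
move=> /connect_inner_del_vertex[inner_vy /(connect_del_vertex ne_vu) ne_yu].
have y_min := minimizer_connect lam_ge0 lam_pos' lam_sum1 g_mean inner_vy v_min.
by move: (y_min v) (g_pos y y_in ne_yu); rewrite g_v leNgt => /negP.
Qed.
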